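(* Let $\mathcal{D}\subseteq\{0,1\}^m$ be nonempty and $c,d\in\mathbb{R}^m$ with $d^\top x>0$ for all $x\in\mathcal{D}$, and let $f(\delta):=\min_{x\in\mathcal{D}}(c-\delta d)^\top x$. Then the look-ahead Newton–Dinkelbach method (described in the context), applied to $f$ with any initial point $\delta^{(1)}$ and supergradient $g^{(1)}\in\partial f(\delta^{(1)})$ satisfying $f(\delta^{(1)})\le 0$ and $g^{(1)}<0$, terminates in $O(m\log m)$ iterations.
   Context: This is the linear fractional combinatorial optimization problem $\min\{c^\top x/d^\top x: x\in\mathcal{D}\}$, whose optimal value is the unique root of $f$. Value and supergradient oracles for $f$ are implemented by a linear optimization oracle over $\mathcal{D}$: for $\delta\in\mathbb{R}$ it returns some $x\in\operatorname{argmin}_{x\in\mathcal{D}}(c-\delta d)^\top x$, giving $f(\delta)=(c-\delta d)^\top x$ and the supergradient $-d^\top x\in\partial f(\delta)$. Here $\partial f(x_0):=\{g: f(x)\le f(x_0)+g(x-x_0)\ \forall x\}$. Look-ahead Newton–Dinkelbach method: input $\delta^{(1)}$, $g^{(1)}\in\partial f(\delta^{(1)})$ with $f(\delta^{(1)})\le0$, $g^{(1)}<0$. For $i=1,2,\dots$: if $f(\delta^{(i)})=0$, return $\delta^{(i)}$. Otherwise set $\delta:=\delta^{(i)}-f(\delta^{(i)})/g^{(i)}$ and query $g\in\partial f(\delta)$; if $f(\delta)=-\infty$, or $f(\delta)<0$ and $g\ge0$, return NO ROOT. Then set $\delta':=2\delta-\delta^{(i)}$ and query $g'\in\partial f(\delta')$;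 if $-\infty<f(\delta')<0$ and $g'<0$, replace $(\delta,g)$ by $(\delta',g')$. Set $\delta^{(i+1)}:=\delta$, $g^{(i+1)}:=g$. *)

From HB Require Import structures.
From mathcomp Require Import all_boot all_order all_algebra.
From mathcomp Require Import reals exp.
Set Implicit Arguments. Unset Strict Implicit. Unset Printing Implicit Defensive.
Import Order.TTheory GRing.Theory Num.Theory.
Local Open Scope ring_scope.

Section LAND.
Variable R : realType.
Variable m : nat.

Definition bvec := {ffun 'I_m -> bool}.

Definition dotb (a : 'I_m -> R) (x : bvec) : R := \sum_i a i * (x i)%:R.

Definition lfval (c d : 'I_m -> R) (delta : R) (x : bvec) : R :=
  \sum_i (c i - delta * d i) * (x i)%:R.

(* f(delta) = min_{x in D} (c - delta d)^T x  (0 if D is empty; never used) *)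
Definition fmin (D : {set bvec}) (c d : 'I_m -> R) (delta : R) : R :=
  match [pick x in D] with
  | Some x0 => \big[Num.min/lfval c d delta x0]_(x in D) lfval c d delta x
  | None => 0
  end.

Definition is_supergrad (f : R -> R) (x0 g : R) : Prop :=
  forall x, f x <= f x0 + g * (x - x0).

Definition lin_oracle (D : {set bvec}) (c d : 'I_m -> R) (O : R -> bvec) : Prop :=
  forall delta, O delta \in D /\
    forall y, y \in D -> lfval c d delta (O delta) <= lfval c d delta y.

(* Look-ahead Newton--Dinkelbach, with f = fmin D c d and supergradient oracle
   g(delta) = - d^T (O delta).  A state is (delta^(i), g^(i)). *)
Definition LAND_f D c d := fmin D c d.
Definition LAND_g (d : 'I_m -> R) (O : R -> bvec) (delta : R) : R := - dotb d (O delta).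

(* Does iteration i, started in state s, return (a root, or NO ROOT)?
   (f is real valued here, so the case f(delta) = -oo never occurs.) *)
Definition LAND_returns D c d O (s : R * R) : bool :=
  let f := LAND_f D c d in
  (f s.1 == 0) ||
  (let delta := s.1 - f s.1 / s.2 in (f delta < 0) && (0 <= LAND_g d O delta)).

Definition LAND_next D c d O (s : R * R) : R * R :=
  let f := LAND_f D c d in
  let delta := s.1 - f s.1 / s.2 in
  let delta' := 2 * delta - s.1 in
  if (f delta' < 0) && (LAND_g d O delta' < 0) then (delta', LAND_g d O delta')
  else (delta, LAND_g d O delta).

(* state at iteration k+1 (k = 0 is the initial state) *)
Definition LAND_state D c d O (s1 : R * R) (k : nat) : R * R :=
  iter k (LAND_next D c d O) s1.

End LAND.

From HB Require Import structures.
From mathcomp Require Import all_boot all_order all_algebra.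
From mathcomp Require Import reals exp.
From mathcomp Require Import ring lra zify.
From mathcomp Require Import perm.
Set Implicit Arguments. Unset Strict Implicit. Unset Printing Implicit Defensive.
Import Order.TTheory GRing.Theory Num.Theory.
Local Open Scope ring_scope.

(* Let [dstar] be the root of [f] and [a := c - dstar d]; then [a^T x >= 0] on
   [D] and [f(δ) = a^T x(δ) - (δ - dstar) d^T x(δ)] for the oracle answer
   [x(δ)].  All iterates stay at or to the right of [dstar], and the Newton
   gap [a^T x / d^T x] bounds the next gap; combining the supergradient
   inequality with [f <= 0] at the look-ahead point shows that the excess
   [a^T x(δ_k)] halves every two iterations while [f] stays negative.  The
   oracle answers at odd iterates therefore form 0/1-vectors [y_0, ..., y_n]
   with [2 a^T y_(i+1) <= a^T y_i] and [a^T y_n > 0].  Following Goemans,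
   [a / a^T y_n] is feasible for
   [{z | (y_i - 2 y_(i+1))^T z >= 0 (i < n), y_n^T z >= 1}], on which
   [y_0^T z >= 2^n]; at a vertex, Cramer's rule bounds [y_0^T z] by
   [m^O(m)], hence [n = O(m log m)]. *)

Section PolyhedronVertex.
Variables (R : realFieldType) (k m : nat) (U : 'M[R]_(k, m)) (b : 'cV[R]_k).

Definition feasible (z : 'cV[R]_m) := forall j, b j 0 <= (U *m z) j 0.

Definition tight (z : 'cV[R]_m) j := (U *m z) j 0 == b j 0.

Definition tight_rows (z : 'cV[R]_m) : 'M[R]_(k, m) :=
  \matrix_(j, l) (if tight z j then U j l else 0).

Definition slack_rows (z : 'cV[R]_m) := [set j | ~~ tight z j].

Lemma tight_rows_mul z j :
  (tight_rows z *m z) j 0 = if tight z j then b j 0 else 0.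
Proof.
rewrite mxE; have [tj|ntj] := boolP (tight z j).
  by rewrite -(eqP tj) mxE; apply: eq_bigr => l _; rewrite mxE tj.
by apply: big1 => l _; rewrite mxE (negbTE ntj) mul0r.
Qed.

Lemma feasible_dual_bound (lam : 'rV[R]_k) z :
  (forall j, 0 <= lam 0 j) -> feasible z -> (lam *m b) 0 0 <= (lam *m U *m z) 0 0.
Proof.
move=> lam_ge0 fz; rewrite -mulmxA !mxE; apply: ler_sum => j _.
exact: ler_wpM2l.
Qed.

(* Ratio test: move along [v] until a constraint decreasing along [v] becomes
   tight. *)
Lemma feasible_ray_step z (v : 'cV[R]_m) j1 :
  feasible z -> tight_rows z *m v = 0 -> (U *m v) j1 0 < 0 ->
  exists2 z', feasible z' & slack_rows z' \proper slack_rows z.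
Proof.
move=> fz tight_v neg_j1.
have Uv_tight j : tight z j -> (U *m v) j 0 = 0.
  move=> tj; move/matrixP: tight_v => /(_ j 0); rewrite [RHS]mxE => <-.
  by rewrite !mxE; apply: eq_bigr => l _; rewrite !mxE tj.
pose ratio j := ((U *m z) j 0 - b j 0) / (- (U *m v) j 0).
have [j0 neg_j0 ratio_min] := @arg_minP _ _ _ j1 (fun j => (U *m v) j 0 < 0) ratio neg_j1.
pose th := ratio j0.
have th_ge0 : 0 <= th by rewrite divr_ge0 ?subr_ge0 ?oppr_ge0 ?fz ?ltW.
pose z' := z + th *: v.
have Uz' j : (U *m z') j 0 = (U *m z) j 0 + th * (U *m v) j 0.
  by rewrite mulmxDr -scalemxAr !mxE.
exists z'.
  move=> j; rewrite Uz'; have := fz j.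
  case: (ltrP ((U *m v) j 0) 0) => Uvj; last first.
    by have := mulr_ge0 th_ge0 Uvj; lra.
  have := ratio_min j Uvj; rewrite -/th ler_pdivlMr ?oppr_gt0 // mulrN; lra.
apply/properP; split.
  apply/subsetP => j; rewrite !inE; apply: contra => tj.
  by rewrite /tight Uz' Uv_tight // mulr0 addr0.
exists j0; rewrite !inE.
  by apply/negP => /Uv_tight Uvj0; rewrite Uvj0 ltxx in neg_j0.
rewrite negbK /tight Uz' /th /ratio; apply/eqP; field.
by rewrite ltr0_neq0.
Qed.

Lemma feasible_step (w : 'rV[R]_m) z :
  (w <= U)%MS -> feasible z -> ~~ (w <= tight_rows z)%MS ->
  exists2 z', feasible z' & slack_rows z' \proper slack_rows z.
Proof.
move=> /submxP [lam ->] fz; rewrite submxE => /matrix0Pn [i [l]].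
rewrite (ord1 i) => lamU_coker.
pose v := col l (cokermx (tight_rows z)).
have tight_v : tight_rows z *m v = 0 by rewrite /v colE mulmxA mulmx_coker mul0mx.
have lamUv : (lam *m (U *m v)) 0 0 != 0.
  suff -> : lam *m (U *m v) = col l (lam *m U *m cokermx (tight_rows z)) by rewrite mxE.
  by rewrite /v !colE !mulmxA.
have [j Uvj] : exists j, (U *m v) j 0 != 0.
  apply/existsP; apply: contraR lamUv; rewrite negb_exists => /forallP Uv0.
  by rewrite mxE big1 // => j _; move: (Uv0 j); rewrite negbK => /eqP ->; rewrite mulr0.
case: (ltrP ((U *m v) j 0) 0) => Uvj_sgn; first exact: feasible_ray_step tight_v Uvj_sgn.
apply: (@feasible_ray_step z (- v) j fz); first by rewrite mulmxN tight_v oppr0.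
by rewrite mulmxN mxE oppr_lt0 lt_def Uvj.
Qed.

Lemma feasible_vertex (w : 'rV[R]_m) z0 :
  (w <= U)%MS -> feasible z0 -> exists2 z, feasible z & (w <= tight_rows z)%MS.
Proof.
move=> wU; have [n] := ubnP #|slack_rows z0|; elim: n z0 => // n IH z slack_n fz.
have [|/(feasible_step wU fz) [z' fz' /proper_card slack_z']] := boolP (w <= tight_rows z)%MS.
  by exists z.
exact: IH (leq_trans slack_z' slack_n) fz'.
Qed.

End PolyhedronVertex.

Section IntegerMatrixBounds.
Variable R : archiRealFieldType.

Lemma norm_sum_le_card s (F : 'I_s -> R) c :
  (forall i, `|F i| <= c) -> `|\sum_i F i| <= s%:R * c.
Proof.
move=> F_le; apply: le_trans (ler_norm_sum _ _ _) _.
rewrite -[s in s%:R]card_ord mulr_natl -sumr_const; exact: ler_sum.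
Qed.

Lemma det_norm_le s (M : 'M[R]_s) c :
  0 <= c -> (forall i j, `|M i j| <= c) -> `|\det M| <= s`!%:R * c ^+ s.
Proof.
move=> c_ge0 M_le; apply: le_trans (ler_norm_sum _ _ _) _.
rewrite -card_Sn mulr_natl -sumr_const; apply: ler_sum => sg _.
rewrite normrM normrX normrN1 expr1n mul1r normr_prod.
rewrite -[s in c ^+ s]card_ord -prodr_const.
by apply: ler_prod => i _; rewrite normr_ge0 M_le.
Qed.

Lemma det_int s (M : 'M[R]_s) :
  (forall i j, M i j \is a Num.int) -> \det M \is a Num.int.
Proof.
move=> M_int; apply: rpred_sum => sg _.
by rewrite rpredM ?rpredX ?rpredN1 //; apply: rpred_prod.
Qed.

(* [|det G| >= 1] as it is a nonzero integer, so [invmx G] is bounded by the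
   cofactors. *)
Lemma invmx_int_norm_le s (G : 'M[R]_s) c i j :
  G \in unitmx -> (forall i j, G i j \is a Num.int) ->
  1 <= c -> (forall i j, `|G i j| <= c) -> `|invmx G i j| <= s`!%:R * c ^+ s.
Proof.
move=> G_unit G_int c_ge1 G_le.
have detG_ge1 : 1 <= `|\det G|.
  by rewrite norm_intr_ge1 ?det_int // -unitfE -unitmxE.
rewrite /invmx G_unit mxE normrM normrV ?unitfE ?normr_eq0 -?unitfE -?unitmxE //.
apply: le_trans (ler_piMl (normr_ge0 _) _) _; first by rewrite invf_le1 // (lt_le_trans ltr01).
rewrite mxE /cofactor normrM normrX normrN1 expr1n mul1r.
apply: le_trans (det_norm_le (le_trans ler01 c_ge1) _) _.
  by move=> a b; rewrite !mxE.
apply: ler_pM; rewrite ?ler0n ?exprn_ge0 ?(le_trans ler01) //.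
  by rewrite ler_nat leq_fact // leq_pred.
by rewrite ler_weXn2l // leq_pred.
Qed.

Lemma gram_unitmx p r (B : 'M[R]_(r, p)) : row_free B -> B *m B^T \in unitmx.
Proof.
move=> B_free; rewrite -row_free_unit -kermx_eq0; apply/eqP/row_matrixP => i.
rewrite row0; set x := row i _.
have xG0 : x *m (B *m B^T) = 0 by apply/sub_kermxP; rewrite row_sub.
suff xB0 : x *m B = 0 by apply: (row_free_inj B_free); rewrite xB0 mul0mx.
have : ((x *m B) *m (x *m B)^T) 0 0 = 0.
  by rewrite trmx_mul mulmxA -(mulmxA x) xG0 mul0mx mxE.
move: (x *m B) => u; rewrite mxE => sum_sq0; apply/rowP => l; rewrite mxE.
have sq_ge0 l' : predT l' -> 0 <= u 0 l' * u^T l' 0.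
  by rewrite mxE -expr2 sqr_ge0.
have /(_ l isT) := psumr_eq0P sq_ge0 sum_sq0.
by rewrite mxE => /eqP; rewrite mulf_eq0 orbb => /eqP.
Qed.

(* If [w] is in the row space of an integer matrix [A], then [w] is a
   combination of the independent rows [B] of [A] with coefficients
   [w B^T (B B^T)^-1], whose size is controlled by [invmx_int_norm_le]. *)
Lemma rowspace_int_bound k p (A : 'M[R]_(k, p)) (w : 'rV[R]_p) (z : 'cV[R]_p) :
  (0 < p)%N -> (w <= A)%MS ->
  (forall i j, A i j \is a Num.int) -> (forall i j, `|A i j| <= 2) ->
  (forall j, `|w 0 j| <= 1) -> (forall i, `|(A *m z) i 0| <= 1) ->
  `|(w *m z) 0 0| <= (2 * p ^ 3 * p`! * (4 * p) ^ p)%:R.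
Proof.
move=> p_gt0 wA A_int A_le w_le Az_le.
set r := \rank A; have r_le : (r <= p)%N by apply: rank_leq_col.
pose f := maxrankfun A; pose B := rowsub f A.
have [nu wE] : exists nu, w = nu *m B.
  by apply/submxP; rewrite (eq_maxrowsub A).
pose G := B *m B^T.
have G_unit : G \in unitmx by apply/gram_unitmx/maxrowsub_free.
have nuE : nu = w *m B^T *m invmx G by rewrite wE -(mulmxA nu) mulmxK.
have G_int i j : G i j \is a Num.int.
  by rewrite mxE; apply: rpred_sum => l _; rewrite !mxE rpredM.
have G_le i j : `|G i j| <= (4 * p)%:R.
  rewrite mxE natrM mulrC; apply: norm_sum_le_card => l; rewrite !mxE normrM.
  have -> : 4%:R = 2 * 2 :> R by rewrite -natrM.
  by rewrite ler_pM ?normr_ge0.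
set K : R := (p`! * (4 * p) ^ p)%:R.
have invG_le i j : `|invmx G i j| <= K.
  apply: le_trans (invmx_int_norm_le _ _ G_unit G_int _ G_le) _.
    by rewrite ler1n muln_gt0.
  by rewrite -natrX -natrM ler_nat leq_mul ?leq_fact ?leq_pexp2l ?muln_gt0.
have wB_le j : `|(w *m B^T) 0 j| <= p%:R * 2.
  rewrite mxE; apply: norm_sum_le_card => l; rewrite !mxE normrM -[2]mul1r.
  by rewrite ler_pM ?normr_ge0 ?w_le ?A_le.
have nu_le i : `|nu 0 i| <= r%:R * (p%:R * 2 * K).
  rewrite nuE mxE; apply: norm_sum_le_card => j.
  by rewrite normrM ler_pM ?normr_ge0 ?wB_le ?invG_le.
have -> : (w *m z) 0 0 = \sum_i nu 0 i * (A *m z) (f i) 0.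
  rewrite wE -mulmxA mxE; apply: eq_bigr => i _; congr (_ * _).
  by rewrite !mxE; apply: eq_bigr => l _; rewrite mxE.
apply: le_trans (norm_sum_le_card (c := r%:R * (p%:R * 2 * K)) _) _.
  by move=> i; rewrite normrM -[X in _ <= X]mulr1 ler_pM ?normr_ge0 ?nu_le ?Az_le.
rewrite /K -!natrM ler_nat.
apply: (@leq_trans (p * (p * (p * 2 * (p`! * (4 * p) ^ p))))).
  by rewrite !leq_mul.
by rewrite !mulnA (mulnC _ 2) -!mulnA.
Qed.

End IntegerMatrixBounds.

Section HalvingChain.
Variables (R : realType) (m n : nat) (y : nat -> bvec m).

Definition chain_mx : 'M[R]_(n.+1, m) :=
  \matrix_(j, l) ((y j l)%:R - (if (j < n)%N then 2 * (y j.+1 l)%:R else 0)).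

Definition chain_rhs : 'cV[R]_n.+1 := \col_j (j == n :> nat)%:R.

Definition head_row : 'rV[R]_m := \row_l (y 0 l)%:R.

Definition pow2_row : 'rV[R]_n.+1 := \row_j 2 ^+ j.

Lemma pow2_telescope (v : nat -> R) :
  \sum_(j < n.+1) 2 ^+ j * (v j - (if (j < n)%N then 2 * v j.+1 else 0)) = v 0%N.
Proof.
under eq_bigr => j _ do rewrite mulrBr.
rewrite sumrB big_ord_recl big_ord_recr /= ltnn mulr0 addr0 expr0 mul1r.
under [X in _ - X]eq_bigr => j _ do rewrite ltn_ord mulrA -exprSr.
by rewrite addrK.
Qed.

Lemma head_row_chain : head_row = pow2_row *m chain_mx.
Proof.
apply/rowP => l; rewrite !mxE -(pow2_telescope (fun j => (y j l)%:R)).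
by apply: eq_bigr => j _; rewrite !mxE.
Qed.

Lemma chain_feasible_lb z :
  feasible chain_mx chain_rhs z -> 2 ^+ n <= (head_row *m z) 0 0.
Proof.
move=> fz; rewrite head_row_chain.
apply: le_trans (feasible_dual_bound _ fz) => [|j]; last by rewrite mxE exprn_ge0.
rewrite mxE (bigD1 ord_max) //= big1 ?addr0 => [|j /negbTE neq_j].
  by rewrite !mxE eqxx mulr1.
by rewrite !mxE (_ : (j == n :> nat) = (j == ord_max)) // neq_j mulr0.
Qed.

End HalvingChain.

Lemma bool_natr_norm_le1 (R : numDomainType) (b : bool) : `|b%:R : R| <= 1.
Proof. by case: b; rewrite ?normr0 ?normr1. Qed.

(* A strictly halving chain [a^T y_0 >= 2 a^T y_1 >= ... >= 2^n a^T y_n > 0]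
   of 0/1-vectors: after normalising [a^T y_n = 1], [a] is a feasible point of
   the chain polyhedron, and a vertex of it has bounded entries by Cramer's
   rule. *)
Lemma halving_chain_bound (R : realType) m n (y : nat -> bvec m) (a : 'I_m -> R) :
  (0 < m)%N ->
  (forall i, (i <= n)%N -> 0 < dotb a (y i)) ->
  (forall i, (i < n)%N -> 2 * dotb a (y i.+1) <= dotb a (y i)) ->
  2 ^+ n <= (2 * m ^ 3 * m`! * (4 * m) ^ m)%:R :> R.
Proof.
move=> m_gt0 ay_gt0 ay_halve.
have s_gt0 := ay_gt0 n (leqnn n); set s := dotb a (y n) in s_gt0.
pose z0 : 'cV[R]_m := \col_l (a l / s).
have Uz0 j : (chain_mx R n y *m z0) j 0 =
    (dotb a (y j) - (if (j < n)%N then 2 * dotb a (y j.+1) else 0)) / s.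
  rewrite mxE /dotb mulrBl; case: ifP => j_lt.
    rewrite mulr_sumr !mulr_suml -sumrB; apply: eq_bigr => l _.
    by rewrite !mxE j_lt; field; rewrite lt0r_neq0.
  rewrite mul0r subr0 mulr_suml; apply: eq_bigr => l _.
  by rewrite !mxE j_lt subr0; field; rewrite lt0r_neq0.
have fz0 : feasible (chain_mx R n y) (chain_rhs R n) z0.
  move=> j; rewrite Uz0 mxE; case: (ltnP j n) => [j_lt|j_ge].
    by rewrite ltn_eqF // divr_ge0 ?subr_ge0 ?ay_halve ?ltW.
  have -> : val j = n by apply/eqP; rewrite eqn_leq j_ge -ltnS ltn_ord.
  by rewrite eqxx subr0 divff // lt0r_neq0.
have head_chain : (head_row R y <= chain_mx R n y)%MS.
  by rewrite (@head_row_chain R m n y) submxMl.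
have [z fz head_tight] := feasible_vertex head_chain fz0.
apply: le_trans (chain_feasible_lb fz) (le_trans (ler_norm _) _).
apply: (rowspace_int_bound m_gt0 head_tight) => [i j|i j|j|i].
- rewrite mxE; case: ifP => _; rewrite ?mxE ?rpred0 // rpredB ?rpred_nat //.
  by case: ifP; rewrite ?rpred0 ?rpredM ?rpred_nat.
- rewrite mxE; case: ifP => _; rewrite ?mxE ?normr0 ?ler0n //.
  by rewrite ler_norml; case: (y i j); case: (y i.+1 j); case: ifP => _ /=; lra.
- by rewrite mxE bool_natr_norm_le1.
- by rewrite tight_rows_mul; case: ifP; rewrite ?normr0 ?ler01 // mxE bool_natr_norm_le1.
Qed.

Lemma fact_leq_expn n : (n`! <= n ^ n)%N.
Proof.
elim: n => // n IH; rewrite factS expnS leq_mul //.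
by apply: leq_trans IH _; case: n => // n; rewrite leq_exp2r.
Qed.

Lemma chain_bound_leq m : (2 <= m)%N ->
  (2 * m ^ 3 * m`! * (4 * m) ^ m <= m ^ (6 * m))%N.
Proof.
move=> m_ge2; have m_gt0 : (0 < m)%N by apply: ltnW.
have le_m4 : (2 * m ^ 3 <= m ^ 4)%N by rewrite (expnS m 3) leq_mul.
have le_m3m : ((4 * m) ^ m <= (m ^ 3) ^ m)%N.
  by rewrite leq_exp2r // (expnS m 2) mulnC leq_mul // (_ : 4 = 2 ^ 2)%N // leq_exp2r.
apply: (@leq_trans (m ^ 4 * m ^ m * (m ^ 3) ^ m)).
  by rewrite !leq_mul ?fact_leq_expn.
by rewrite -expnM -!expnD leq_pexp2l //; lia.
Qed.

Lemma halving_chain_length (R : realType) m n (y : nat -> bvec m) (a : 'I_m -> R) :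
  (2 <= m)%N ->
  (forall i, (i <= n)%N -> 0 < dotb a (y i)) ->
  (forall i, (i < n)%N -> 2 * dotb a (y i.+1) <= dotb a (y i)) ->
  (n <= 6 * m * up_log 2 m)%N.
Proof.
move=> m_ge2 ay_gt0 ay_halve.
have := halving_chain_bound (ltnW m_ge2) ay_gt0 ay_halve.
rewrite -natrX ler_nat => /leq_trans/(_ (chain_bound_leq m_ge2)) pow_le.
rewrite -(@leq_exp2l 2) // mulnC expnM; apply: leq_trans pow_le _.
by rewrite leq_exp2r ?up_logP // muln_gt0 (ltnW m_ge2).
Qed.

Section OracleFunction.
Variables (R : realType) (m : nat) (D : {set bvec m}) (c d : 'I_m -> R).
Variable O : R -> bvec m.
Hypothesis d_pos : forall x, x \in D -> 0 < dotb d x.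
Hypothesis O_oracle : lin_oracle D c d O.

Local Notation f := (fmin D c d).

Lemma lfvalE δ x : lfval c d δ x = dotb c x - δ * dotb d x.
Proof.
rewrite /lfval /dotb mulr_sumr -sumrB; apply: eq_bigr => i _.
by rewrite mulrBl mulrA.
Qed.

Lemma oracle_in δ : O δ \in D. Proof. by case: (O_oracle δ). Qed.

Lemma oracle_min δ x : x \in D -> lfval c d δ (O δ) <= lfval c d δ x.
Proof. by case: (O_oracle δ) => _; apply. Qed.

Lemma fmin_oracle δ : f δ = lfval c d δ (O δ).
Proof.
rewrite /fmin; case: pickP => [x0 x0_in|/(_ (O δ))]; last by rewrite oracle_in.
apply/eqP; rewrite eq_le; apply/andP; split.
  by rewrite (bigD1 (O δ)) ?oracle_in //= ge_min lexx.
apply: (@big_ind _ (fun v => lfval c d δ (O δ) <= v)) => [|u v|x x_in].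
- exact: oracle_min.
- by rewrite le_min => -> ->.
- exact: oracle_min.
Qed.

Definition ratio x := dotb c x / dotb d x.

Definition xstar := [arg min_(x < O 0 in D) ratio x]%O.

Definition dstar := ratio xstar.

Lemma xstar_in : xstar \in D.
Proof. by rewrite /xstar; case: arg_minP => //; apply: oracle_in. Qed.

Lemma dstar_le_ratio x : x \in D -> dstar <= ratio x.
Proof.
by move=> x_in; rewrite /dstar /xstar; case: arg_minP => [|y _]; [apply: oracle_in|apply].
Qed.

Definition rcost i := c i - dstar * d i.

Lemma lfval_rcost δ x : lfval c d δ x = dotb rcost x - (δ - dstar) * dotb d x.
Proof. by rewrite lfvalE /dotb /rcost !mulr_sumr -!sumrB; apply: eq_bigr => i _; ring. Qed.

Lemma rcost_ge0 x : x \in D -> 0 <= dotb rcost x.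
Proof.
move=> x_in; have := lfval_rcost dstar x; rewrite subrr mul0r subr0 lfvalE => <-.
by rewrite subr_ge0 -ler_pdivlMr ?d_pos ?dstar_le_ratio.
Qed.

Lemma rcost_xstar : dotb rcost xstar = 0.
Proof.
have := lfval_rcost dstar xstar; rewrite subrr mul0r subr0 lfvalE => <-.
by rewrite /dstar /ratio mulfVK ?subrr ?lt0r_neq0 ?d_pos ?xstar_in.
Qed.

Definition slope δ := dotb d (O δ).

Definition excess δ := dotb rcost (O δ).

Lemma slope_gt0 δ : 0 < slope δ. Proof. exact: d_pos (oracle_in δ). Qed.

Lemma excess_ge0 δ : 0 <= excess δ. Proof. exact: rcost_ge0 (oracle_in δ). Qed.

Lemma fmin_excess δ : f δ = excess δ - (δ - dstar) * slope δ.
Proof. by rewrite fmin_oracle lfval_rcost. Qed.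

Lemma fmin_le_xstar δ : f δ <= - ((δ - dstar) * dotb d xstar).
Proof. by rewrite fmin_oracle -[X in _ <= X]add0r -rcost_xstar -lfval_rcost oracle_min ?xstar_in. Qed.

Lemma fmin_lt0 δ : (f δ < 0) = (dstar < δ).
Proof.
have := slope_gt0 δ; have := excess_ge0 δ; have := d_pos xstar_in.
have := fmin_le_xstar δ; rewrite fmin_excess => f_le dx_gt0 ex_ge0 sl_gt0.
apply/idP/idP => [f_lt0|δ_gt]; last by nra.
by rewrite ltNge; apply/negP => δ_le; nra.
Qed.

Lemma fmin_le0 δ : (f δ <= 0) = (dstar <= δ).
Proof.
have := slope_gt0 δ; have := excess_ge0 δ; have := d_pos xstar_in.
have := fmin_le_xstar δ; rewrite fmin_excess => f_le dx_gt0 ex_ge0 sl_gt0.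
apply/idP/idP => [f_le0|δ_ge]; last by nra.
by rewrite leNgt; apply/negP => δ_lt; nra.
Qed.

Lemma slope_homo : {homo slope : δ δ' / δ <= δ'}.
Proof.
move=> δ δ' le_δδ'; have := oracle_min δ (oracle_in δ').
have := oracle_min δ' (oracle_in δ); rewrite !lfvalE -/(slope δ) -/(slope δ').
have [->|ne_δδ'] := eqVneq δ δ'; first by rewrite lexx.
have : 0 < δ' - δ by rewrite subr_gt0 lt_neqAle ne_δδ'.
nra.
Qed.

Lemma excess_tangent δ δ' :
  excess δ - (δ - dstar) * slope δ <= excess δ' - (δ - dstar) * slope δ'.
Proof. by rewrite -!lfval_rcost oracle_min ?oracle_in. Qed.

Lemma LAND_nextE s : LAND_next D c d O s =
  let δ := s.1 - f s.1 / s.2 in let δ' := 2 * δ - s.1 in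
  if dstar < δ' then (δ', - slope δ') else (δ, - slope δ).
Proof. by rewrite /LAND_next /LAND_f /LAND_g /= fmin_lt0 oppr_lt0 slope_gt0 andbT. Qed.

Lemma newton_oracle δ : δ - f δ / - slope δ = dstar + excess δ / slope δ.
Proof.
rewrite fmin_excess; have := slope_gt0 δ.
by move=> /lt0r_neq0 slope_neq0; field.
Qed.

Section Iterates.
Variables δ1 g1 : R.
Hypotheses (f1_le0 : f δ1 <= 0) (g1_super : is_supergrad f δ1 g1) (g1_lt0 : g1 < 0).

Let st k := LAND_state D c d O (δ1, g1) k.

Lemma iterate_invariant k :
  dstar <= (st k).1 /\ ((0 < k)%N -> st k = ((st k).1, - slope (st k).1)).
Proof.
elim: k => [|k [dstar_le st_k]]; first by rewrite -fmin_le0.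
have newton_ge : dstar <= (st k).1 - f (st k).1 / (st k).2.
  case: k dstar_le st_k => [|k] _ st_k.
    rewrite /= -fmin_le0; apply: le_trans (g1_super _) _.
    rewrite (_ : f δ1 + g1 * (δ1 - f δ1 / g1 - δ1) = 0) //.
    by field; rewrite ltr0_neq0.
  rewrite st_k // newton_oracle lerDl.
  by rewrite divr_ge0 ?excess_ge0 ?ltW ?slope_gt0.
rewrite /st /= -/(st k) LAND_nextE /=.
by case: ifP => [/ltW|] //=; split.
Qed.

Lemma dstar_le_iterate k : dstar <= (st k).1.
Proof. by case: (iterate_invariant k). Qed.

Lemma iterate_oracle k : (0 < k)%N -> st k = ((st k).1, - slope (st k).1).
Proof. by case: (iterate_invariant k). Qed.

Let gap k := (st k).1 - dstar.
Let sl k := slope (st k).1.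
Let ex k := excess (st k).1.
Let newton_gap k := ex k / sl k.

Lemma gap_ge0 k : 0 <= gap k. Proof. by rewrite subr_ge0 dstar_le_iterate. Qed.

Lemma sl_gt0 k : 0 < sl k. Proof. exact: slope_gt0. Qed.

Lemma ex_newton_gap k : ex k = newton_gap k * sl k.
Proof. by rewrite mulfVK ?lt0r_neq0 ?sl_gt0. Qed.

Lemma ex_le_gap_sl k : ex k <= gap k * sl k.
Proof. by have := dstar_le_iterate k; rewrite -fmin_le0 fmin_excess subr_le0. Qed.

Lemma newton_gap_le k : newton_gap k <= gap k.
Proof. by rewrite ler_pdivrMr ?sl_gt0 ?ex_le_gap_sl. Qed.

Lemma newton_gap_lt k : f (st k).1 < 0 -> newton_gap k < gap k.
Proof. by rewrite fmin_excess subr_lt0 => ex_lt; rewrite ltr_pdivrMr ?sl_gt0. Qed.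

Lemma gap_next k : (0 < k)%N ->
  gap k.+1 = if 0 < 2 * newton_gap k - gap k then 2 * newton_gap k - gap k
             else newton_gap k.
Proof.
move=> k_gt0; rewrite /gap /st /= -/(st k) LAND_nextE iterate_oracle //=.
rewrite newton_oracle -/(ex k) -/(sl k) -/(newton_gap k).
have -> : (dstar < 2 * (dstar + newton_gap k) - (st k).1) =
          (0 < 2 * newton_gap k - ((st k).1 - dstar)) by apply/idP/idP; lra.
by case: ifP => _ /=; ring.
Qed.

Lemma gap_next_le k : (0 < k)%N -> gap k.+1 <= newton_gap k.
Proof. by move=> k_gt0; rewrite gap_next //; case: ifP => //; have := newton_gap_le k; lra. Qed.

Lemma sl_next_le k : (0 < k)%N -> sl k.+1 <= sl k.
Proof.
move=> k_gt0; apply: slope_homo.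
by have := gap_next_le k_gt0; have := newton_gap_le k; rewrite /gap; lra.
Qed.

Lemma gap_sl_next_le k : (0 < k)%N -> gap k.+1 * sl k.+1 <= ex k.
Proof.
move=> k_gt0; rewrite ex_newton_gap.
by apply: ler_pM; rewrite ?gap_ge0 ?gap_next_le ?sl_next_le ?(ltW (sl_gt0 _)).
Qed.

Lemma ex_next_le k : (0 < k)%N -> ex k.+1 <= ex k.
Proof. by move=> k_gt0; apply: le_trans (ex_le_gap_sl _) (gap_sl_next_le k_gt0). Qed.

(* With gap [t], Newton gap [e < t] and accepted look-ahead gap [t' = 2 e - t],
   the supergradient inequality at the current point and [f <= 0] at the new
   one give [2 P' <= t' G <= e G = P]. *)
Lemma ex_halve_lookahead k : (0 < k)%N -> f (st k).1 < 0 ->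
  0 < 2 * newton_gap k - gap k -> 2 * ex k.+1 <= ex k.
Proof.
move=> k_gt0 f_lt0 accept.
have gapE : gap k.+1 = 2 * newton_gap k - gap k by rewrite gap_next // accept.
have tangent : ex k - gap k * sl k <= ex k.+1 - gap k * sl k.+1 by apply: excess_tangent.
have ex'_le := ex_le_gap_sl k.+1; have e_lt := newton_gap_lt f_lt0.
have exE := ex_newton_gap k; have := gap_ge0 k; have := sl_gt0 k; have := sl_gt0 k.+1.
move: tangent ex'_le e_lt exE gapE accept.
move: (ex k) (ex k.+1) (sl k) (sl k.+1) (gap k) (gap k.+1) (newton_gap k).
move=> P P' G G' t t' e tangent ex'_le e_lt exE gapE accept G'_gt0 G_gt0 t_ge0.
have tP'_le : t * P' <= t' * (P' - P + t * G) by nra.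
have : 2 * P' * (t - e) <= t' * G * (t - e) by nra.
rewrite ler_pM2r ?subr_gt0 // => P'_le.
have : t' * G <= e * G by rewrite ler_pM2r //; lra.
lra.
Qed.

Lemma ex_halve_no_lookahead k : (0 < k)%N ->
  2 * newton_gap k.+1 <= gap k.+1 -> 2 * ex k.+1 <= ex k.
Proof.
move=> k_gt0 reject; apply: le_trans (gap_sl_next_le k_gt0).
by rewrite ex_newton_gap mulrA ler_pM2r ?sl_gt0.
Qed.

Lemma ex_halve_two_steps k : (0 < k)%N -> f (st k.+1).1 < 0 -> 2 * ex k.+2 <= ex k.
Proof.
move=> k_gt0 f_lt0.
case: (ltrP 0 (2 * newton_gap k.+1 - gap k.+1)) => [accept|]; last rewrite subr_le0.
  by have := ex_halve_lookahead (ltn0Sn k) f_lt0 accept; have := ex_next_le k_gt0; lra.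
by move/(ex_halve_no_lookahead k_gt0); have := ex_next_le (ltn0Sn k); lra.
Qed.

Lemma ex_gt0 k : (0 < k)%N -> f (st k.+1).1 < 0 -> 0 < ex k.
Proof.
move=> k_gt0; rewrite fmin_lt0 -subr_gt0 -/(gap k.+1) => gap_gt0.
by rewrite ex_newton_gap mulr_gt0 ?sl_gt0 // (lt_le_trans gap_gt0) ?gap_next_le.
Qed.

(* The oracle answers at the odd iterates form a halving chain for the
   reduced cost [c - dstar d]. *)
Lemma LAND_negative_run_length n :
  (2 <= m)%N -> (forall j, (j <= 2 * n + 2)%N -> f (st j).1 < 0) ->
  (n <= 6 * m * up_log 2 m)%N.
Proof.
move=> m_ge2 f_lt0.
apply: (@halving_chain_length R m n (fun i => O (st (2 * i + 1)).1) rcost m_ge2) => i i_le.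
  by apply: (@ex_gt0 (2 * i + 1)); rewrite ?addn1 // f_lt0 //; lia.
have := @ex_halve_two_steps (2 * i + 1); rewrite addn1 (_ : (2 * i).+3 = 2 * i.+1 + 1)%N; last by lia.
by apply; rewrite // f_lt0 //; lia.
Qed.

Lemma LAND_returns_within : (2 <= m)%N ->
  exists2 k, (k <= 12 * m * up_log 2 m + 4)%N & LAND_returns D c d O (st k).
Proof.
move=> m_ge2; set N := (12 * m * up_log 2 m + 4)%N.
have [/existsP [j returns_j]|] := boolP [exists j : 'I_N.+1, LAND_returns D c d O (st j)].
  by exists j; rewrite // -ltnS.
rewrite negb_exists => /forallP no_return; exfalso.
have f_lt0 j : (j <= 2 * (6 * m * up_log 2 m).+1 + 2)%N -> f (st j).1 < 0.
  move=> j_le; have j_lt : (j < N.+1)%N by rewrite /N; lia.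
  have /norP [f_neq0 _] := no_return (Ordinal j_lt).
  by rewrite lt_neqAle f_neq0 fmin_le0 dstar_le_iterate.
by have := LAND_negative_run_length m_ge2 f_lt0; rewrite ltnn.
Qed.

End Iterates.

End OracleFunction.

Lemma up_log2_ln (R : realType) m :
  (2 <= m)%N -> (up_log 2 m)%:R * ln (2 : R) <= 2 * ln (m%:R : R).
Proof.
move=> m_ge2; have U_gt0 : (0 < up_log 2 m)%N by rewrite up_log_gt0.
have ln2_le : ln (2 : R) <= ln m%:R by rewrite ler_ln ?posrE ?ltr0n ?ler_nat // ltnW.
have : ln ((2 : R) ^+ (up_log 2 m).-1) < ln m%:R.
  by rewrite ltr_ln ?posrE ?exprn_gt0 ?ltr0n ?(ltnW m_ge2) // -natrX ltr_nat up_log_gtn.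
rewrite lnXn // -[X in X < _]mulr_natr -(prednK U_gt0) -natr1 mulrDl mul1r.
lra.
Qed.

Lemma iteration_budget_le (R : realType) m : (2 <= m)%N ->
  (12 * m * up_log 2 m + 5)%:R <= 40 / ln (2 : R) * m%:R * ln (m%:R : R).
Proof.
move=> m_ge2; have ln2_gt0 : 0 < ln (2 : R) by rewrite ln_gt0 // ltr1n.
have M_ge2 : 2 <= m%:R :> R by rewrite ler_nat.
have ln2_le : ln (2 : R) <= ln m%:R by rewrite ler_ln ?posrE ?ltr0n ?ler_nat // ltnW.
have Uln_le := up_log2_ln R m_ge2.
rewrite (mulrC 40) -!mulrA mulrC ler_pdivlMr // natrD !natrM.
set M := (m%:R : R) in M_ge2 Uln_le ln2_le *; set L := ln M in Uln_le ln2_le *.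
set U := (up_log 2 m)%:R in Uln_le *; set l := ln (2 : R) in ln2_gt0 ln2_le Uln_le *.
have : M * (U * l) <= M * (2 * L) by rewrite ler_wpM2l // (le_trans _ M_ge2).
have : 2 * L <= M * L by rewrite ler_wpM2r // (le_trans (ltW ln2_gt0)).
nra.
Qed.

Theorem theorem3p6 (R : realType) :
  exists C : R, forall (m : nat), (2 <= m)%N ->
  forall (D : {set bvec m}) (c d : 'I_m -> R),
    D != set0 ->
    (forall x, x \in D -> 0 < dotb d x) ->
  forall (O : R -> bvec m), lin_oracle D c d O ->
  forall delta1 g1 : R,
    fmin D c d delta1 <= 0 ->
    is_supergrad (fmin D c d) delta1 g1 ->
    g1 < 0 ->
    exists k : nat,
      (k.+1)%:R <= C * m%:R * ln (m%:R : R) /\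
      LAND_returns D c d O (LAND_state D c d O (delta1, g1) k).
Proof.
(* Nonemptiness of [D] is implied by the oracle. *)
exists (40 / ln 2) => m m_ge2 D c d _ d_pos O O_oracle δ1 g1 f1_le0 g1_super g1_lt0.
have [k k_le returns_k] := LAND_returns_within d_pos O_oracle f1_le0 g1_super g1_lt0 m_ge2.
exists k; split => //; apply: le_trans (iteration_budget_le R m_ge2).
by rewrite ler_nat addnS ltnS.
Qed.
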